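(* Let $p$ be an odd prime and let $\alpha_0\in\mathbb{Q}_p$ have an infinite Browkin $p$-adic continued fraction expansion $[b_0,b_1,b_2,\ldots]$. Define $A_{-2}=0$, $A_{-1}=1$, $A_i=b_iA_{i-1}+A_{i-2}$ and $B_{-2}=1$, $B_{-1}=0$, $B_i=b_iB_{i-1}+B_{i-2}$ for $i\ge 0$. Then $\lvert A_n\rvert_\infty<\lvert A_n\rvert_p$ and $\lvert B_n\rvert_\infty<\lvert B_n\rvert_p$ for all sufficiently large $n$.
   Context: $\lvert\cdot\rvert_p$ denotes the $p$-adic absolute value and $\lvert\cdot\rvert_\infty$ the usual archimedean absolute value on $\mathbb{Q}$. Every $x\in\mathbb{Q}_p$ has a unique expansion $x=\sum_{i\ge r}a_ip^i$ with $r\in\mathbb{Z}$ and $a_i\in\{-\frac{p-1}{2},\ldots,\frac{p-1}{2}\}$; Browkin's function is $s(x)=\sum_{i=r}^{0}a_ip^i$ (so $s(x)=0$ if $r>0$). The Browkin continued fraction expansion $[b_0,b_1,\ldots]$ of $\alpha_0$ is obtained by iterating $b_i=s(\alpha_i)$ and $\alpha_{i+1}=1/(\alpha_i-b_i)$ as long as $\alpha_i\neq b_i$ (if $\alpha_i=b_i$ the expansion stops). *)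

(* Q_p is modelled as Cauchy sequences of rationals for the
   p-adic absolute value, compared up to the usual equivalence. *)
From mathcomp Require Import all_boot all_order all_algebra.
Set Implicit Arguments. Unset Strict Implicit. Unset Printing Implicit Defensive.
Import Order.TTheory GRing.Theory Num.Theory.
Local Open Scope ring_scope.

Definition padic_val (p : nat) (q : rat) : int :=
  (logn p `|numq q|%N)%:Z - (logn p `|denq q|%N)%:Z.

Definition padic_abs (p : nat) (q : rat) : rat :=
  if q == 0 then 0 else (p%:Q) ^ (- padic_val p q).

Definition padic_cauchy (p : nat) (u : nat -> rat) : Prop :=
  forall e : rat, 0 < e -> exists N : nat, forall m n : nat,
    (N <= m)%N -> (N <= n)%N -> padic_abs p (u m - u n) < e.

Definition padic_eq (p : nat) (u w : nat -> rat) : Prop :=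
  forall e : rat, 0 < e -> exists N : nat, forall n : nat,
    (N <= n)%N -> padic_abs p (u n - w n) < e.

(* x = sum_{i >= r} a_i p^i  with digit a_i stored at a (i - r) *)
Definition padic_expansion (p : nat) (x : nat -> rat) (r : int) (a : nat -> int) : Prop :=
  padic_eq p x (fun N => \sum_(0 <= j < N) (a j)%:~R * (p%:Q) ^ (r + j%:Z)).

Definition balanced_digits (p : nat) (a : nat -> int) : Prop :=
  forall j, 2%:Z * `|a j| <= (p%:Z - 1).

(* Browkin's s(x) = sum_{i=r}^{0} a_i p^i  (0 if r > 0) *)
Definition browkin_s_of (p : nat) (r : int) (a : nat -> int) : rat :=
  if r <= 0 then \sum_(0 <= j < `|1 - r|%N) (a j)%:~R * (p%:Q) ^ (r + j%:Z)
  else 0.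

Definition is_browkin_s (p : nat) (x : nat -> rat) (y : rat) : Prop :=
  exists (r : int) (a : nat -> int),
    balanced_digits p a /\ padic_expansion p x r a /\ y = browkin_s_of p r a.

(* Shifted sequences: contA' b 0 = A_{-2}, contA' b 1 = A_{-1}, contA' b (n+2) = A_n *)
Fixpoint contAB (b : nat -> rat) (n : nat) : (rat * rat) * (rat * rat) :=
  (* returns ((A_{n-2}, A_{n-1}), (B_{n-2}, B_{n-1})) *)
  match n with
  | 0 => ((0, 1), (1, 0))
  | n'.+1 => let: ((a2, a1), (b2, b1)) := contAB b n' in
             ((a1, b n' * a1 + a2), (b1, b n' * b1 + b2))
  end.

Definition contA (b : nat -> rat) (n : nat) : rat := (contAB b n.+1).1.2.
Definition contB (b : nat -> rat) (n : nat) : rat := (contAB b n.+1).2.2.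

From mathcomp Require Import all_boot all_order all_algebra.
From mathcomp Require Import zify ring lra.
From Stdlib Require Import Classical.
Import Order.TTheory GRing.Theory Num.Theory.
Local Open Scope ring_scope.

(* Write v for the p-adic valuation.  Browkin's s(x) is a sum of balanced digits
   times nonpositive powers of p, so |s(x)| <= p/2, v(s(x)) <= 0 and
   v(x - s(x)) >= 1.  Hence every later partial quotient b_(i+1), the s-value of
   1/(alpha_i - b_i), has v(b_(i+1)) <= -1, and the three-term recurrences make
   v(A_n) and v(B_n) decrease strictly: |A_n|_p, |B_n|_p >= p^(n-1).  On the
   archimedean side |b_i| <= p/2 gives |A_n|, |B_n| <= (p-1)^(n+1), because
   Q = p - 1 >= 2 satisfies Q^2 >= Q (Q+1)/2 + 1; and (p-1)^(n+1) < p^(n-1)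
   for n large by Bernoulli's inequality. *)

Definition cf_recurrence {R : ringType} (c X : nat -> R) : Prop :=
  forall k, X k.+2 = c k.+1 * X k.+1 + X k.

Lemma contAB_recurrence (b : nat -> rat) :
  cf_recurrence b (fun k => (contAB b k).1.2) /\ cf_recurrence b (fun k => (contAB b k).2.2).
Proof. by split=> k /=; case: (contAB b k) => [[? ?] [? ?]]. Qed.

Section PadicValuation.

Variable p : nat.
Hypothesis p_prime : prime p.
Local Notation v := (padic_val p).

Lemma padic_val_frac (u w : int) : u != 0 -> w != 0 ->
  v (u%:~R / w%:~R) = (logn p `|u|)%:Z - (logn p `|w|)%:Z.
Proof.
move=> u0 w0; set x : rat := u%:~R / w%:~R.
have x0 : x != 0 by rewrite mulf_neq0 ?invr_eq0 ?intr_eq0.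
have cross : numq x * w = u * denq x.
  apply/eqP; rewrite -(eqr_int rat) !rmorphM /= -eqr_div ?intr_eq0 ?denq_neq0 //.
  by rewrite divq_num_den.
have /(congr1 (logn p)) := congr1 absz cross.
rewrite !abszM !lognM ?absz_gt0 ?numq_eq0 ?denq_neq0 //.
rewrite /padic_val; lia.
Qed.

Lemma padic_val0 : v 0 = 0.
Proof. by rewrite /padic_val /= logn0 logn1. Qed.

Lemma padic_val1 : v 1 = 0.
Proof. by rewrite /padic_val /= logn1. Qed.

Lemma padic_valN x : v (- x) = v x.
Proof. by rewrite /padic_val numqN denqN abszN. Qed.

Lemma padic_valM x y : x != 0 -> y != 0 -> v (x * y) = v x + v y.
Proof.
move=> x0 y0; have -> : x * y = (numq x * numq y)%:~R / (denq x * denq y)%:~R.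
  rewrite !rmorphM /= -{1}(divq_num_den x) -{1}(divq_num_den y).
  by field; rewrite !intr_eq0 !denq_neq0.
rewrite padic_val_frac ?mulf_neq0 ?numq_eq0 ?denq_neq0 // !abszM.
rewrite !lognM ?absz_gt0 ?numq_eq0 ?denq_neq0 // /padic_val; lia.
Qed.

Lemma padic_valV x : x != 0 -> v x^-1 = - v x.
Proof.
move=> x0; rewrite -{1}(divq_num_den x) invf_div padic_val_frac ?numq_eq0 ?denq_neq0 //.
rewrite /padic_val; lia.
Qed.

Lemma padic_val_int (n : int) : n != 0 -> v n%:~R = (logn p `|n|)%:Z.
Proof.
by move=> n0; have := @padic_val_frac n 1 n0 (oner_neq0 _); rewrite divr1 absz1 logn1 subr0.
Qed.

Lemma padic_val_natp : v p%:Q = 1.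
Proof.
by rewrite -[p%:Q]/(p%:Z%:~R) padic_val_int ?eqz_nat -?lt0n ?prime_gt0 //= logn_prime ?eqxx.
Qed.

Lemma padic_val_neq0 x : v x != 0 -> x != 0.
Proof. by apply: contraNneq => ->; rewrite padic_val0. Qed.

Lemma padic_val_le_neq0 x : v x <= -1 -> x != 0.
Proof. by move=> vx; apply: padic_val_neq0; rewrite ltr0_neq0 // (le_lt_trans vx) ?ltrN10. Qed.

Lemma logn_addz_ge_min (a b : int) : a != 0 -> b != 0 -> a + b != 0 ->
  (minn (logn p (absz a)) (logn p (absz b)) <= logn p (absz (a + b)%R))%N.
Proof.
move=> a0 b0 ab0; set m := minn _ _.
have dvd_pm (c : int) : c != 0 -> (m <= logn p `|c|)%N -> ((p ^ m)%:Z %| c)%Z.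
  by move=> c0 le_m; rewrite dvdzE /= pfactor_dvdn ?absz_gt0.
suff : ((p ^ m)%:Z %| a + b)%Z by rewrite dvdzE /= pfactor_dvdn ?absz_gt0.
by apply: rpredD; apply: dvd_pm; rewrite ?geq_minl ?geq_minr.
Qed.

Lemma padic_valD_ge x y (k : int) : x + y != 0 ->
  (x != 0 -> k <= v x) -> (y != 0 -> k <= v y) -> k <= v (x + y).
Proof.
have [->|x0] := eqVneq x 0; first by rewrite add0r => y0 _ /(_ y0).
have [->|y0] := eqVneq y 0; first by rewrite addr0 => _ /(_ isT).
move=> xy0 /(_ isT) kx /(_ isT) ky.
set a := numq x * denq y; set b := numq y * denq x.
have xyE : x + y = (a + b)%:~R / (denq x * denq y)%:~R.
  rewrite !rmorphD !rmorphM /= -{1}(divq_num_den x) -{1}(divq_num_den y).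
  by field; rewrite !intr_eq0 !denq_neq0.
have ab0 : a + b != 0 by apply: contraNneq xy0 => ab0; rewrite xyE ab0 mul0r.
have := @logn_addz_ge_min a b; rewrite ?mulf_neq0 ?numq_eq0 ?denq_neq0 // => /(_ isT isT ab0).
rewrite xyE padic_val_frac ?mulf_neq0 ?denq_neq0 //.
move: kx ky; rewrite /padic_val !abszM !lognM ?absz_gt0 ?numq_eq0 ?denq_neq0 // => kx ky le_min.
(* [set] merges two syntactically different instances of int addition for lia *)
set c := a + b in le_min *; lia.
Qed.

Lemma padic_valD_lt x y : x != 0 -> y != 0 -> v x < v y -> x + y != 0 /\ v (x + y) = v x.
Proof.
move=> x0 y0 lt_xy.
have xy0 : x + y != 0.
  by apply: contraTneq lt_xy => /eqP; rewrite addr_eq0 => /eqP->; rewrite padic_valN ltxx.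
have ge_x : v x <= v (x + y) by apply: padic_valD_ge => // _; apply: ltW.
have le_x : v (x + y) <= v x.
  rewrite leNgt; apply/negP => lt_x.
  have : v x + 1 <= v ((x + y) + - y).
    by apply: padic_valD_ge => [|_|_]; rewrite ?addrK ?padic_valN ?lezD1.
  by rewrite addrK lezD1 ltxx.
by split=> //; apply/eqP; rewrite eq_le le_x ge_x.
Qed.

Lemma padic_val_int_lt (n : int) : n != 0 -> (`|n| < p)%N -> v n%:~R = 0.
Proof.
move=> n0 lt_np; rewrite padic_val_int //; apply/eqP; rewrite eqz_nat -leqn0 leqNgt.
by rewrite logn_gt0 mem_primes p_prime absz_gt0 n0 /= gtnNdvd ?absz_gt0.
Qed.

Lemma padic_abs_ge_expn z (m : nat) : z != 0 -> v z <= - m%:Z -> p%:Q ^+ m <= padic_abs p z.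
Proof.
move=> z0 le_m; rewrite /padic_abs (negbTE z0) exprnP ler_eXz2l ?ltr1n ?prime_gt1 //.
by rewrite lerNr.
Qed.

Definition in_pZp (z : rat) : Prop := z = 0 \/ 1 <= v z.

Lemma in_pZpD x y : in_pZp x -> in_pZp y -> in_pZp (x + y).
Proof.
move=> [->|vx] [->|vy]; rewrite ?addr0 ?add0r; try by [left|right].
have [|xy0] := eqVneq (x + y) 0; first by left.
by right; apply: padic_valD_ge.
Qed.

Lemma in_pZpN x : in_pZp x -> in_pZp (- x).
Proof. by case=> [->|vx]; [left; rewrite oppr0|right; rewrite padic_valN]. Qed.

Lemma in_pZp_int (n : int) : (p%:Z %| n)%Z -> in_pZp n%:~R.
Proof.
have [->|n0] := eqVneq n 0; first by left.
rewrite dvdzE => pn; right; rewrite padic_val_int // lez_nat logn_gt0.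
by rewrite mem_primes p_prime absz_gt0 n0.
Qed.

Lemma in_pZp_padic_abs z : padic_abs p z < 1 -> in_pZp z.
Proof.
rewrite /padic_abs; have [->|z0] := eqVneq z 0; first by left.
rewrite -(expr0z p%:Q) ltr_eXz2l ?ltr1n ?prime_gt1 // oppr_lt0 => vz.
by right; rewrite -lezD1 add0r in vz.
Qed.

Lemma padic_valDr_pZp x w : x != 0 -> v x <= 0 -> in_pZp w ->
  x + w != 0 /\ v (x + w) = v x.
Proof.
move=> x0 vx [->|vw]; first by rewrite addr0.
apply: padic_valD_lt => //; last by apply: le_lt_trans vx (lt_le_trans ltr01 vw).
by apply: padic_val_neq0; apply: contraTneq vw => ->; rewrite ler10.
Qed.

Definition trunc_digits (a : nat -> int) (K : nat) : rat :=
  \sum_(0 <= j < K.+1) (a j)%:~R * p%:Q ^ (- K%:Z + j%:Z).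

Lemma trunc_digits0 a : trunc_digits a 0 = (a 0%N)%:~R.
Proof. by rewrite /trunc_digits big_nat1 mulr1. Qed.

Lemma trunc_digitsS a K : trunc_digits a K.+1 = (a K.+1)%:~R + trunc_digits a K / p%:Q.
Proof.
have p0 : p%:Q != 0 by rewrite pnatr_eq0 -lt0n prime_gt0.
rewrite /trunc_digits big_nat_recr //= addrC addNr expr0z mulr1; congr (_ + _).
rewrite mulr_suml; apply: eq_bigr => j _; rewrite -mulrA -exprN1 -expfzDr //.
by congr (_ * _ ^ _); lia.
Qed.

Lemma browkin_s_ofE r a : r <= 0 -> browkin_s_of p r a = trunc_digits a `|r|.
Proof.
move=> r_le0; rewrite /browkin_s_of r_le0 /trunc_digits.
have -> : `|1 - r|%N = `|r|.+1 by lia.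
by apply: eq_bigr => j _; congr (_ * _ ^ _); lia.
Qed.

Lemma norm_digit_le a j : balanced_digits p a -> `|(a j)%:~R : rat| <= (p%:Q - 1) / 2.
Proof.
move=> /(_ j); rewrite -(ler_int rat) intrM intrB intr_norm /= => digit.
by rewrite ler_pdivlMr //; lra.
Qed.

Lemma norm_trunc_digits_le a K : balanced_digits p a -> `|trunc_digits a K| <= p%:Q / 2.
Proof.
move=> bal; have p_gt1 : 1 < p%:Q by rewrite ltr1n prime_gt1.
have digit j := norm_digit_le a j bal.
elim: K => [|K IH]; first by rewrite trunc_digits0; apply: le_trans (digit 0%N) _; lra.
rewrite trunc_digitsS; apply: le_trans (ler_normD _ _) _.
have : `|trunc_digits a K / p%:Q| <= 1 / 2.
  by rewrite normrM normfV (@ger0_norm _ p%:Q) ?ler0n // ler_pdivrMr; lra.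
by have := digit K.+1; lra.
Qed.

Lemma padic_val_digit a j : balanced_digits p a -> a j != 0 -> v (a j)%:~R = 0.
Proof. by move=> /(_ j) digit aj0; apply: padic_val_int_lt => //; lia. Qed.

Lemma padic_val_trunc_digits a K : balanced_digits p a ->
  trunc_digits a K = 0 \/ v (trunc_digits a K) <= 0.
Proof.
move=> bal; have p0 : p%:Q != 0 by rewrite pnatr_eq0 -lt0n prime_gt0.
have digit j : (a j)%:~R = 0 :> rat \/ v (a j)%:~R = 0.
  by have [->|/(padic_val_digit a j bal)] := eqVneq (a j) 0; [left|right].
elim: K => [|K IH]; first by rewrite trunc_digits0; case: (digit 0%N) => ->; [left|right].
set t := trunc_digits a K; rewrite trunc_digitsS -/t.
have [t0|t0] := eqVneq t 0.
  by rewrite t0 mul0r addr0; case: (digit K.+1) => ->; [left|right].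
have vt : v t <= 0 by case: IH => // /eqP; rewrite (negbTE t0).
have tp0 : t / p%:Q != 0 by rewrite mulf_neq0 ?invr_eq0.
have vtp : v (t / p%:Q) = v t - 1 by rewrite padic_valM ?invr_eq0 // padic_valV // padic_val_natp.
right; have [->|a0] := eqVneq (a K.+1) 0; first by rewrite add0r vtp; lia.
have va := padic_val_digit a K.+1 bal a0.
have a0' : (a K.+1)%:~R != 0 :> rat by rewrite intr_eq0.
rewrite addrC.
have [_ ->] : t / p%:Q + (a K.+1)%:~R != 0 /\ v (t / p%:Q + (a K.+1)%:~R) = v (t / p%:Q).
  by apply: padic_valD_lt => //; rewrite va vtp; lia.
by rewrite vtp; lia.
Qed.

Lemma browkin_s_bound x y : is_browkin_s p x y -> `|y| <= p%:Q / 2 /\ (y = 0 \/ v y <= 0).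
Proof.
move=> [r [a [bal [_ ->]]]]; have [r_le0|r_gt0] := lerP r 0.
  by rewrite browkin_s_ofE //; split; [apply: norm_trunc_digits_le|apply: padic_val_trunc_digits].
rewrite /browkin_s_of (leNgt r) r_gt0 /= normr0; split; last by left.
by rewrite divr_ge0 ?ler0n.
Qed.

Lemma in_pZp_tail (a : nat -> int) (r : int) m n : (forall j, (m <= j)%N -> 1 <= r + j%:Z) ->
  in_pZp (\sum_(m <= j < n) (a j)%:~R * p%:Q ^ (r + j%:Z)).
Proof.
move=> pos; rewrite big_nat_cond; apply: big_ind; [by left|exact: in_pZpD|].
move=> j /andP[/andP[/pos rj _] _].
have [k rjE] : exists k : nat, r + j%:Z = k.+1%:Z by exists `|r + j%:Z|.-1; lia.
rewrite rjE -exprnP -natrX -[(p ^ k.+1)%N%:R]/((p ^ k.+1)%N%:Z%:~R) -intrM.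
by apply/in_pZp_int/dvdz_mull; rewrite dvdzE /= dvdn_exp.
Qed.

Lemma browkin_s_near x y : is_browkin_s p x y ->
  exists N, forall n, (N <= n)%N -> in_pZp (x n - y).
Proof.
move=> [r [a [_ [xE ->]]]]; have [N xN] := xE 1 ltr01.
set S := fun n => \sum_(0 <= j < n) (a j)%:~R * p%:Q ^ (r + j%:Z).
exists (N + `|1 - r|)%N => n le_Nn.
rewrite -(subrK (S n) (x n)) -addrA; apply: in_pZpD.
  by apply: in_pZp_padic_abs; apply: xN; lia.
rewrite /browkin_s_of; case: ifP => r_le0.
  rewrite /S (@big_cat_nat _ _ _ `|1 - r|%N) //=; last by lia.
  by rewrite addrAC subrr add0r; apply: in_pZp_tail => j; lia.
by rewrite subr0; apply: in_pZp_tail => j _; move: r_le0; lia.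
Qed.

Lemma padic_cauchy_eventually_neq (x : nat -> rat) c :
  padic_cauchy p x -> ~ padic_eq p x (fun _ => c) ->
  exists N, forall n, (N <= n)%N -> x n != c.
Proof.
move=> cauchy x_neq_c; apply: NNPP => never; apply: x_neq_c => e e0.
have [N xN] := cauchy e e0; exists N => n le_Nn.
have [m le_Nm <-] : exists2 m, (N <= m)%N & x m = c.
  apply: NNPP => none; apply: never; exists N => m le_Nm; apply/eqP => xm.
  by apply: none; exists m.
exact: xN.
Qed.

Lemma padic_val_browkin_partial_quotient (alpha : nat -> nat -> rat) (b : nat -> rat) :
  (forall i, padic_cauchy p (alpha i)) ->
  (forall i, is_browkin_s p (alpha i) (b i)) ->
  (forall i, ~ padic_eq p (alpha i) (fun _ => b i)) ->
  (forall i, padic_eq p (alpha i.+1) (fun n => (alpha i n - b i)^-1)) ->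
  forall i, v (b i.+1) <= -1.
Proof.
move=> cauchy browkin not_final next i.
have [N1 near_i] := browkin_s_near _ _ (browkin i).
have [N2 neq_i] := padic_cauchy_eventually_neq _ _ (cauchy i) (not_final i).
have [N3 near_inv] := next i 1 ltr01.
have [N4 near_i1] := browkin_s_near _ _ (browkin i.+1).
pose n := (N1 + N2 + N3 + N4)%N.
pose d := alpha i n - b i; pose z := alpha i.+1 n.
have d0 : d != 0 by rewrite subr_eq0 neq_i // /n; lia.
have vd : 1 <= v d.
  by case: (near_i n ltac:(rewrite /n; lia)) => // /eqP; rewrite (negbTE d0).
have dV0 : d^-1 != 0 by rewrite invr_eq0.
have vdV : v d^-1 <= -1 by rewrite padic_valV //; lia.
have z_near : in_pZp (z - d^-1) by apply/in_pZp_padic_abs/near_inv; rewrite /n; lia.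
have zb_near : in_pZp (- (z - b i.+1)) by apply/in_pZpN/near_i1; rewrite /n; lia.
have [z0 vz] : z != 0 /\ v z = v d^-1.
  by have := padic_valDr_pZp _ _ dV0 (le_trans vdV (lerN10 _)) z_near; rewrite addrC subrK.
have vz0 : v z <= 0 by rewrite vz (le_trans vdV (lerN10 _)).
have := padic_valDr_pZp _ _ z0 vz0 zb_near.
by rewrite opprB addrC subrK vz => -[_ ->].
Qed.

Lemma padic_val_cf_recurrence (c X : nat -> rat) :
  cf_recurrence c X -> (forall k, v (c k.+1) <= -1) ->
  X 1%N != 0 -> (X 0%N = 0 \/ v (X 1%N) < v (X 0%N)) ->
  forall k, X k.+1 != 0 /\ v (X k.+1) <= v (X 1%N) - k%:Z.
Proof.
move=> rec vc X10 X0.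
suff inv k : [/\ X k.+1 != 0, X k = 0 \/ v (X k.+1) < v (X k) & v (X k.+1) <= v (X 1%N) - k%:Z].
  by move=> k; case: (inv k).
elim: k => [|k [Xk10 Xk vXk1]]; first by rewrite subr0.
have c0 := padic_val_le_neq0 _ (vc k).
have cX0 : c k.+1 * X k.+1 != 0 by rewrite mulf_neq0.
have vcX : v (c k.+1) + v (X k.+1) = v (c k.+1 * X k.+1) by rewrite padic_valM.
have [Xk2 vXk2] : X k.+2 != 0 /\ v (X k.+2) = v (c k.+1 * X k.+1).
  rewrite rec; have [->|Xk0] := eqVneq (X k) 0; first by rewrite addr0.
  apply: padic_valD_lt => //; case: Xk => [/eqP|]; rewrite ?(negbTE Xk0) // -vcX.
  by have := vc k; lia.
by split=> //; [right|]; rewrite vXk2 -vcX; have := vc k; lia.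
Qed.

Lemma padic_abs_contB_ge (b : nat -> rat) : (forall i, v (b i.+1) <= -1) ->
  forall m, p%:Q ^+ m <= padic_abs p (contB b m).
Proof.
move=> vb m; have /= := padic_val_cf_recurrence _ _ (contAB_recurrence b).2 vb.
rewrite mulr0 add0r padic_val1 oner_neq0 => /(_ isT (or_introl erefl) m) [B0 vB].
by apply: padic_abs_ge_expn => //; rewrite add0r in vB.
Qed.

Lemma padic_abs_contA_ge (b : nat -> rat) : (forall i, v (b i.+1) <= -1) ->
  b 0%N = 0 \/ v (b 0%N) <= 0 -> forall m, p%:Q ^+ m <= padic_abs p (contA b m.+1).
Proof.
move=> vb vb0 m.
have rec : cf_recurrence (fun k => b k.+1) (fun k => (contAB b k.+1).1.2).
  by move=> k; apply: (contAB_recurrence b).1.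
have /= := padic_val_cf_recurrence _ _ rec (fun k => vb k.+1).
rewrite mulr1 addr0.
have [->|b00] := eqVneq (b 0%N) 0.
  rewrite mulr0 add0r padic_val1 oner_neq0 => /(_ isT (or_introl erefl) m) [A0 vA].
  by apply: padic_abs_ge_expn => //; rewrite add0r in vA.
have vb00 : v (b 0%N) <= 0 by case: vb0 => // /eqP; rewrite (negbTE b00).
have b10 := padic_val_le_neq0 _ (vb 0%N).
have vbb : v (b 1%N * b 0%N) = v (b 1%N) + v (b 0%N) by rewrite padic_valM.
have [A10 vA1] : b 1%N * b 0%N + 1 != 0 /\ v (b 1%N * b 0%N + 1) = v (b 1%N * b 0%N).
  by apply: padic_valD_lt; rewrite ?mulf_neq0 ?oner_neq0 // padic_val1 vbb; have := vb 0%N; lia.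
have A1_lt : b 0%N = 0 \/ v (b 1%N) + v (b 0%N) < v (b 0%N) by right; have := vb 0%N; lia.
rewrite A10 vA1 vbb => /(_ isT A1_lt m) [A0 vA].
by apply: padic_abs_ge_expn => //; apply: le_trans vA _; have := vb 0%N; lia.
Qed.

End PadicValuation.

Lemma norm_cf_recurrence_le (R : realFieldType) (Q : R) (c X : nat -> R) : 2 <= Q ->
  (forall i, `|c i| <= (Q + 1) / 2) -> cf_recurrence c X ->
  `|X 0%N| <= 1 -> `|X 1%N| <= Q -> forall k, `|X k| <= Q ^+ k.
Proof.
move=> Q2 c_le rec X0 X1.
suff bound2 k : `|X k| <= Q ^+ k /\ `|X k.+1| <= Q ^+ k.+1 by move=> k; case: (bound2 k).
elim: k => [|k [Xk Xk1]]; first by rewrite expr0 expr1.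
split=> //; rewrite rec !exprS.
have Qk0 : 0 <= Q ^+ k by rewrite exprn_ge0 //; lra.
have cX : `|c k.+1 * X k.+1| <= (Q + 1) / 2 * (Q * Q ^+ k).
  by rewrite normrM -exprS ler_pM.
apply: le_trans (ler_normD _ _) _.
have gap : Q * (Q * Q ^+ k) - ((Q + 1) / 2 * (Q * Q ^+ k) + Q ^+ k) =
             (Q - 2) * (Q + 1) * Q ^+ k / 2 by field.
have : (Q + 1) / 2 * (Q * Q ^+ k) + Q ^+ k <= Q * (Q * Q ^+ k).
  by rewrite -subr_ge0 gap !mulr_ge0 //; lra.
by apply: le_trans; apply: lerD.
Qed.

Lemma norm_contAB_le (Q : rat) (b : nat -> rat) : 2 <= Q ->
  (forall i, `|b i| <= (Q + 1) / 2) ->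
  forall n, `|contA b n| <= Q ^+ n.+1 /\ `|contB b n| <= Q ^+ n.+1.
Proof.
move=> Q2 b_le n; have [recA recB] := contAB_recurrence b.
have normb0 : `|b 0%N| <= Q by apply: le_trans (b_le 0%N) _; lra.
split; [apply: (norm_cf_recurrence_le _ _ _ _ Q2 b_le recA)
      |apply: (norm_cf_recurrence_le _ _ _ _ Q2 b_le recB)];
  rewrite /= ?mulr1 ?addr0 ?mulr0 ?add0r ?normr1 ?normr0 //; lra.
Qed.

Lemma bernoulli_expn q m : (q ^ m * (q + m) <= q * (q + 1) ^ m)%N.
Proof.
elim: m => [|m IH]; first by rewrite expn0 mul1n addn0 muln1.
have : (q * q ^ m <= q ^ m * (q + m))%N by rewrite mulnC leq_mul2l leq_addr orbT.
rewrite !expnS; move: IH; set a := (q ^ m)%N; set c := ((q + 1) ^ m)%N; nia.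
Qed.

Lemma expnSS_lt_expn_succ q m : (0 < q)%N -> (q ^ 3 <= m)%N -> (q ^ m.+2 < (q + 1) ^ m)%N.
Proof.
move=> q_gt0 le_m; have := bernoulli_expn q m.
have : (q ^ m * q ^ 3 < q ^ m * (q + m))%N by rewrite ltn_mul2l expn_gt0 q_gt0 /=; lia.
rewrite !expnS expn0 muln1; set a := (q ^ m)%N; set c := ((q + 1) ^ m)%N; nia.
Qed.

Theorem lemma2 (p : nat) (alpha : nat -> nat -> rat) (b : nat -> rat) :
  prime p -> odd p ->
  (forall i, padic_cauchy p (alpha i)) ->
  (forall i, is_browkin_s p (alpha i) (b i)) ->
  (forall i, ~ padic_eq p (alpha i) (fun _ => b i)) ->
  (forall i, padic_eq p (alpha i.+1) (fun n => (alpha i n - b i)^-1)) ->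
  exists N : nat, forall n : nat, (N <= n)%N ->
    `|contA b n| < padic_abs p (contA b n) /\
    `|contB b n| < padic_abs p (contB b n).
Proof.
move=> p_prime p_odd cauchy browkin not_final next.
have vb := padic_val_browkin_partial_quotient p p_prime _ _ cauchy browkin not_final next.
have vb0 := (browkin_s_bound p p_prime _ _ (browkin 0%N)).2.
set q := p.-1; have pE : p = q.+1 by rewrite prednK ?prime_gt0.
have q_ge2 : (2 <= q)%N.
  by move: (prime_gt1 p_prime) p_odd; rewrite pE; case: (q) => [|[|]].
have b_le i : `|b i| <= (q%:R + 1) / 2.
  by rewrite natr1 -pE; apply: (browkin_s_bound p p_prime _ _ (browkin i)).1.
exists (q ^ 3).+1 => -[//|m] le_m.
have pow_lt : q%:R ^+ m.+2 < p%:Q ^+ m.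
  by rewrite pE -[q.+1]addn1 -!natrX ltr_nat expnSS_lt_expn_succ //; lia.
have Q_ge2 : 2 <= q%:R :> rat by rewrite ler_nat.
have [normA normB] := norm_contAB_le _ _ Q_ge2 b_le m.+1.
split; [apply: le_lt_trans normA (lt_le_trans pow_lt _)
      |apply: le_lt_trans normB (lt_le_trans pow_lt _)].
  exact: padic_abs_contA_ge.
apply: le_trans (padic_abs_contB_ge p p_prime b vb m.+1).
by rewrite ler_eXn2l // ltr1n prime_gt1.
Qed.
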